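(* Let $a,p,b,q$ be the vertices of a convex quadrilateral in the plane, appearing in this order along its boundary. If $|pa|=|pb|$ and $\angle aqb\geqslant 2\pi/3$, then $|pq|\leqslant \frac{2}{\sqrt{3}}\,|pa|$.
   Context: $|xy|$ denotes the Euclidean distance between points $x$ and $y$; $\angle aqb$ is the angle at $q$ between segments $qa$ and $qb$. *)

From Stdlib Require Import Reals Lra.
Open Scope R_scope.

Definition point : Type := (R * R)%type.

Definition edist (x y : point) : R :=
  sqrt ((fst x - fst y)^2 + (snd x - snd y)^2).

Definition angle (a q b : point) : R :=
  acos (((fst a - fst q) * (fst b - fst q) + (snd a - snd q) * (snd b - snd q))
        / (edist q a * edist q b)).

Definition turn (x y z : point) : R :=
  (fst y - fst x) * (snd z - snd y) - (snd y - snd x) * (fst z - fst y).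

(* x1 x2 x3 x4 are the vertices of a (non-degenerate) convex quadrilateral,
   listed in this order along its boundary: all four turns are strictly
   in the same direction. *)
Definition convex_quad (x1 x2 x3 x4 : point) : Prop :=
  (0 < turn x1 x2 x3 /\ 0 < turn x2 x3 x4 /\ 0 < turn x3 x4 x1 /\ 0 < turn x4 x1 x2)
  \/
  (turn x1 x2 x3 < 0 /\ turn x2 x3 x4 < 0 /\ turn x3 x4 x1 < 0 /\ turn x4 x1 x2 < 0).

From Stdlib Require Import Reals Lra Psatz.
Open Scope R_scope.

(* Put the origin at the midpoint of ab and let d = b - m, z = p - m, w = q - m.
   Equidistance makes z orthogonal to d, and the angle condition at q reads
   2 |d x w| <= sqrt 3 (|d|^2 - |w|^2): q lies in the lens of points seeing ab
   under an angle of at least 2 PI / 3.  Lagrange's identity expresses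
   |d|^2 |w - z|^2 through |d|^2 |w|^2, d x w and d x z, and the claim
   3 |pq|^2 <= 4 |pa|^2 becomes a sum of squares once one knows
   sqrt 3 |d x w| <= |d|^2. *)

Definition vsub (x y : point) : point := (fst x - fst y, snd x - snd y).
Definition dot (u v : point) : R := fst u * fst v + snd u * snd v.
Definition cross (u v : point) : R := fst u * snd v - snd u * fst v.
Definition norm2 (u : point) : R := dot u u.
Definition norm (u : point) : R := sqrt (norm2 u).
Definition midpoint (x y : point) : point := ((fst x + fst y) / 2, (snd x + snd y) / 2).

Lemma norm2_nonneg (u : point) : 0 <= norm2 u.
Proof. unfold norm2, dot; nra. Qed.

Lemma lagrange_identity (d u v : point) :
  norm2 d * dot u v = dot d u * dot d v + cross d u * cross d v.
Proof. unfold norm2, dot, cross; ring. Qed.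

Lemma edist_norm (x y : point) : edist x y = norm (vsub y x).
Proof. unfold edist, norm, norm2, dot, vsub; simpl; f_equal; ring. Qed.

Lemma angle_vsub (a q b : point) :
  angle a q b = acos (dot (vsub a q) (vsub b q) / (norm (vsub a q) * norm (vsub b q))).
Proof. unfold angle; rewrite !edist_norm; reflexivity. Qed.

Lemma acos_ge_2PI3 (t : R) : 2 * PI / 3 <= acos t -> t <= -1/2.
Proof.
  intro ht.
  destruct (Rle_lt_dec t (-1)) as [ht1 | ht1]; [lra |].
  destruct (Rle_lt_dec 1 t) as [ht2 | ht2].
  - unfold acos in ht.
    destruct (Rle_dec t (-1)); [lra |].
    destruct (Rle_dec 1 t); [pose proof PI_RGT_0; lra | lra].
  - rewrite <- (cos_acos t) by lra.
    rewrite <- cos_2PI3.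
    pose proof (acos_bound t); pose proof PI_RGT_0.
    apply cos_decr_1; lra.
Qed.

Lemma obtuse_norms_pos (u v : point) :
  dot u v / (norm u * norm v) <= -1/2 -> 0 < norm u * norm v.
Proof.
  intro h.
  assert (0 <= norm u * norm v) by (apply Rmult_le_pos; apply sqrt_pos).
  destruct (Req_dec (norm u * norm v) 0) as [e | e]; [| lra].
  rewrite e, Rdiv_0_r in h; lra.
Qed.

Lemma obtuse_dot_cross (u v : point) :
  dot u v / (norm u * norm v) <= -1/2 ->
  dot u v < 0 /\ Rabs (cross u v) <= - sqrt 3 * dot u v.
Proof.
  intro h.
  pose proof (obtuse_norms_pos u v h) as hL.
  set (L := norm u * norm v) in *.
  assert (hdot : 2 * dot u v <= - L).
  { replace (dot u v) with (dot u v / L * L) by (field; lra). nra. }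
  assert (hLL : L * L = dot u v ^ 2 + cross u v ^ 2).
  { unfold L, norm.
    replace (sqrt (norm2 u) * sqrt (norm2 v) * (sqrt (norm2 u) * sqrt (norm2 v)))
      with ((sqrt (norm2 u) * sqrt (norm2 u)) * (sqrt (norm2 v) * sqrt (norm2 v))) by ring.
    rewrite !sqrt_sqrt by apply norm2_nonneg.
    change (norm2 v) with (dot v v); rewrite (lagrange_identity u v v); ring. }
  split; [lra |].
  assert (hs : 0 < sqrt 3) by (apply sqrt_lt_R0; lra).
  apply Rsqr_incr_0_var; [| nra].
  rewrite <- Rsqr_abs; unfold Rsqr.
  replace (- sqrt 3 * dot u v * (- sqrt 3 * dot u v))
    with (sqrt 3 * sqrt 3 * (dot u v * dot u v)) by ring.
  rewrite sqrt_sqrt by lra.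
  nra.
Qed.

Lemma lens_inequality (N W Y H : R) :
  0 <= N -> Y ^ 2 <= N * W -> 2 * Rabs Y <= sqrt 3 * (N - W) ->
  3 * (N * W - 2 * Y * H + H ^ 2) <= 4 * (H ^ 2 + N ^ 2).
Proof.
  intros hN hY hlens.
  set (s := sqrt 3) in *.
  assert (hs : 0 < s) by (apply sqrt_lt_R0; lra).
  assert (hs2 : s * s = 3) by (apply sqrt_sqrt; lra).
  set (t := Rabs Y) in *; set (h := Rabs H).
  assert (ht : Y ^ 2 = t ^ 2) by (unfold t; rewrite pow2_abs; ring).
  assert (hh : H ^ 2 = h ^ 2) by (unfold h; rewrite pow2_abs; ring).
  assert (hYH : - (Y * H) <= t * h) by (unfold t, h; rewrite <- Rabs_mult, <- Rabs_Ropp; apply Rle_abs).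
  assert (ht0 : 0 <= t) by apply Rabs_pos.
  assert (hNW : 3 * (N * W) <= 3 * N ^ 2 - 2 * s * N * t).
  { assert (0 <= s * N * (s * (N - W) - 2 * t)).
    { apply Rmult_le_pos; [apply Rmult_le_pos |]; lra. }
    nra. }
  assert (hst : s * t <= N).
  { assert ((s * t - N) * (s * t + 3 * N) <= 0) by nra. nra. }
  (* the slack left after bounding [3 N W] by the lens condition *)
  assert (E : N ^ 2 + h ^ 2 + 2 * s * N * t - 6 * t * h
              = (h - 3 * t) ^ 2 + (N - s * t) * (N + 3 * s * t)) by nra.
  assert (0 <= (h - 3 * t) ^ 2) by apply pow2_ge_0.
  assert (0 <= (N - s * t) * (N + 3 * s * t)) by (apply Rmult_le_pos; nra).
  lra.
Qed.

Lemma bisector_lens_bound (d z w : point) :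
  0 < norm2 d -> dot d z = 0 ->
  2 * Rabs (cross d w) <= sqrt 3 * (norm2 d - norm2 w) ->
  3 * norm2 (vsub w z) <= 4 * (norm2 z + norm2 d).
Proof.
  intros hN hdz hlens.
  apply (Rmult_le_reg_l (norm2 d)); [exact hN |].
  assert (E1 : norm2 d * (3 * norm2 (vsub w z))
               = 3 * (norm2 d * norm2 w - 2 * cross d w * cross d z + cross d z ^ 2)).
  { transitivity (3 * (norm2 d * norm2 w - 2 * (dot d w * dot d z + cross d w * cross d z)
                       + (dot d z ^ 2 + cross d z ^ 2))).
    - unfold norm2, vsub, dot, cross; simpl; ring.
    - rewrite hdz; ring. }
  assert (E2 : norm2 d * (4 * (norm2 z + norm2 d)) = 4 * (cross d z ^ 2 + norm2 d ^ 2)).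
  { transitivity (4 * ((dot d z ^ 2 + cross d z ^ 2) + norm2 d ^ 2)).
    - unfold norm2, dot, cross; ring.
    - rewrite hdz; ring. }
  rewrite E1, E2.
  apply lens_inequality; [lra | | exact hlens].
  change (norm2 w) with (dot w w); rewrite (lagrange_identity d w w).
  pose proof (pow2_ge_0 (dot d w)); lra.
Qed.

Lemma sqrt_le_2_div_sqrt3 (x y : R) :
  0 <= x -> 3 * x <= 4 * y -> sqrt x <= 2 / sqrt 3 * sqrt y.
Proof.
  intros hx hxy.
  assert (hs : 0 < sqrt 3) by (apply sqrt_lt_R0; lra).
  apply Rsqr_incr_0_var; unfold Rsqr.
  - replace (2 / sqrt 3 * sqrt y * (2 / sqrt 3 * sqrt y))
      with (4 / (sqrt 3 * sqrt 3) * (sqrt y * sqrt y)) by (field; lra).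
    rewrite !sqrt_sqrt by lra.
    lra.
  - apply Rmult_le_pos; [apply Rlt_le, Rdiv_lt_0_compat | apply sqrt_pos]; lra.
Qed.

Theorem lemma2 (a p b q : point) :
  convex_quad a p b q ->
  edist p a = edist p b ->
  2 * PI / 3 <= angle a q b ->
  edist p q <= 2 / sqrt 3 * edist p a.
Proof.
  intros _ hpa hangle.
  set (m := midpoint a b).
  set (d := vsub b m); set (z := vsub p m); set (w := vsub q m).
  assert (hdz : dot d z = 0).
  { rewrite !edist_norm in hpa.
    apply sqrt_inj in hpa; try apply norm2_nonneg.
    transitivity ((norm2 (vsub a p) - norm2 (vsub b p)) / 4).
    - unfold d, z, m, midpoint, norm2, dot, vsub; simpl; field.
    - rewrite hpa; field. }
  rewrite angle_vsub in hangle.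
  apply acos_ge_2PI3, obtuse_dot_cross in hangle as [hdot hcross].
  assert (Edot : dot (vsub a q) (vsub b q) = norm2 w - norm2 d)
    by (unfold d, w, m, midpoint, norm2, dot, vsub; simpl; field).
  assert (Ecross : cross (vsub a q) (vsub b q) = 2 * cross d w)
    by (unfold d, w, m, midpoint, cross, vsub; simpl; field).
  rewrite Edot, Ecross, Rabs_mult, (Rabs_pos_eq 2) in * by lra.
  assert (hN : 0 < norm2 d) by (pose proof (norm2_nonneg w); lra).
  pose proof (bisector_lens_bound d z w hN hdz ltac:(lra)) as hkey.
  rewrite !edist_norm.
  apply sqrt_le_2_div_sqrt3; [apply norm2_nonneg |].
  replace (norm2 (vsub q p)) with (norm2 (vsub w z))
    by (unfold w, z, norm2, dot, vsub; simpl; ring).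
  replace (norm2 (vsub a p)) with (norm2 z + 2 * dot d z + norm2 d)
    by (unfold d, z, m, midpoint, norm2, dot, vsub; simpl; field).
  lra.
Qed.
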